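(* Let $u(x,t)$ be a smooth solution of the Rosenau equation $$u_t + u_{xxxxt} + u_x + u u_x = 0,\qquad t>0,$$ which is $L$-periodic in $x$ for some $L>0$. Then the quantity $$\int_0^L \Big(\frac{1}{3}u^3 + u^2\Big)\,\mathrm{d}x$$ is independent of $t$.
   Context: All functions are smooth in $(x,t)$ and $L$-periodic in the spatial variable $x$, so boundary terms from integration by parts over one period vanish. Subscripts denote partial derivatives. *)

From Stdlib Require Import Reals.
From Coquelicot Require Import Coquelicot.
Open Scope R_scope.

Fixpoint Dx (n : nat) (u : R -> R -> R) : R -> R -> R :=
  match n with
  | O => u
  | S k => fun x t => Derive (fun y => Dx k u y t) x
  end.

Fixpoint Dt (m : nat) (u : R -> R -> R) : R -> R -> R :=
  match m with
  | O => u
  | S k => fun x t => Derive (fun s => Dt k u x s) t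
  end.

Definition smooth_on_halfplane (u : R -> R -> R) : Prop :=
  forall (n m : nat) (x t : R), 0 < t ->
    ex_derive (fun y => Dx n (Dt m u) y t) x /\
    ex_derive (fun s => Dx n (Dt m u) x s) t /\
    continuous (fun p : R * R => Dx n (Dt m u) (fst p) (snd p)) (x, t).

Definition periodic_x (L : R) (u : R -> R -> R) : Prop :=
  forall x t, 0 < t -> u (x + L) t = u x t.

Definition rosenau_solution (u : R -> R -> R) : Prop :=
  forall x t, 0 < t ->
    Dt 1 u x t + Dx 4 (Dt 1 u) x t + Dx 1 u x t + u x t * Dx 1 u x t = 0.

(* Writing w := u + u^2/2 + u_xxxt, the Rosenau equation is the conservation law
   u_t = -w_x.  Hence (u^2 + 2u) u_t = 2 (w - u_xxxt) u_t = -(w^2)_x - 2 u_xxxt u_t,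
   and -2 u_xxxt u_t = (u_xt^2 - 2 u_xxt u_t)_x, so the time derivative
   (u^2 + 2u) u_t of the energy density u^3/3 + u^2 is an exact x-derivative of a
   periodic flux.  Differentiating under the integral sign, the energy therefore
   has zero time derivative on t > 0, and is constant there. *)

From Stdlib Require Import Reals Lra.
From Coquelicot Require Import Coquelicot.
(* Imported after [Reals], whose [Rderiv.Dx] would otherwise shadow [Defs.Dx]. *)
From Pilot Require Import Defs.
Open Scope R_scope.

Lemma Derive_shift (g : R -> R) (L x : R) :
  Derive (fun y => g (y + L)) x = Derive g (x + L).
Proof.
  unfold Derive; f_equal; apply Lim_ext; intros h.
  now replace (x + L + h) with (x + h + L) by ring.
Qed.

Lemma RInt_derive_eq_0 (G g : R -> R) (a b : R) :
  (forall x, Rmin a b <= x <= Rmax a b -> is_derive G x (g x)) ->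
  (forall x, Rmin a b <= x <= Rmax a b -> continuous g x) ->
  G b = G a -> RInt g a b = 0.
Proof.
  intros HG Hg Hab.
  rewrite (is_RInt_unique _ _ _ _ (is_RInt_derive G g a b HG Hg)), Hab.
  exact (minus_eq_zero (G := R_AbelianGroup) (G a)).
Qed.

Lemma is_derive_0_pos_eq (f : R -> R) :
  (forall s, 0 < s -> is_derive f s 0) ->
  forall t1 t2, 0 < t1 -> 0 < t2 -> f t1 = f t2.
Proof.
  intros Hf t1 t2 H1 H2.
  assert (Hmin : 0 < Rmin t1 t2) by now apply Rmin_glb_lt.
  destruct (MVT_gen f t1 t2 (fun _ => 0)) as [c [_ Hc]].
  - intros x Hx; apply Hf; lra.
  - intros x Hx; apply continuity_pt_filterlim.
    apply (ex_derive_continuous (K := R_AbsRing) (V := R_NormedModule)).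
    exists 0; apply Hf; lra.
  - lra.
Qed.

Lemma continuous_swap (g : R -> R -> R) (x t : R) :
  continuous (fun p : R * R => g (fst p) (snd p)) (x, t) ->
  continuous (fun p : R * R => g (snd p) (fst p)) (t, x).
Proof.
  intros Hg; apply (continuous_comp_2 snd fst g); auto using continuous_fst, continuous_snd.
Qed.

Lemma continuous_section_fst (g : R -> R -> R) (x t : R) :
  continuous (fun p : R * R => g (fst p) (snd p)) (x, t) ->
  continuous (fun y => g y t) x.
Proof.
  intros Hg; apply (continuous_comp_2 (fun y => y) (fun _ => t) g x);
    auto using continuous_id, continuous_const.
Qed.

Definition energy_density (v : R) : R := / 3 * v ^ 3 + v ^ 2.

Lemma is_derive_energy_density (v : R) :
  is_derive energy_density v (v ^ 2 + 2 * v).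
Proof. unfold energy_density; auto_derive; [easy | field]. Qed.

Lemma continuous_energy_density (v : R) : continuous energy_density v.
Proof.
  apply (ex_derive_continuous (K := R_AbsRing) (V := R_NormedModule)).
  eexists; apply is_derive_energy_density.
Qed.

Lemma continuous_energy_rate {T : UniformSpace} (a b : T -> R) (p : T) :
  continuous a p -> continuous b p ->
  continuous (fun q => b q * (a q ^ 2 + 2 * a q)) p.
Proof.
  intros Ha Hb; apply (continuous_mult (K := R_AbsRing)); [exact Hb |].
  apply (continuous_comp a (fun v => v ^ 2 + 2 * v)); [exact Ha |].
  apply (ex_derive_continuous (K := R_AbsRing) (V := R_NormedModule)); auto_derive; easy.
Qed.

(* [w0], ..., [w3] play u_t, u_xt, u_xxt, u_xxxt; the last hypothesis is the equation at [x]. *)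
Lemma is_derive_energy_flux (v w0 w1 w2 w3 : R -> R) (x dv dw3 : R) :
  is_derive v x dv -> is_derive w0 x (w1 x) -> is_derive w1 x (w2 x) ->
  is_derive w2 x (w3 x) -> is_derive w3 x dw3 ->
  w0 x + dw3 + dv + v x * dv = 0 ->
  is_derive (fun y => - (v y + v y ^ 2 / 2 + w3 y) ^ 2 - 2 * w2 y * w0 y + w1 y ^ 2) x
    (w0 x * (v x ^ 2 + 2 * v x)).
Proof.
  intros Hv H0 H1 H2 H3 Heq.
  auto_derive.
  - repeat split; eexists; eassumption.
  - rewrite (is_derive_unique (fun y : R => v y) _ _ Hv),
      (is_derive_unique (fun y : R => w0 y) _ _ H0), (is_derive_unique (fun y : R => w1 y) _ _ H1),
      (is_derive_unique (fun y : R => w2 y) _ _ H2), (is_derive_unique (fun y : R => w3 y) _ _ H3).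
    replace dw3 with (- (w0 x + dv + v x * dv)) by lra.
    field.
Qed.

Section Periodicity.

Variables (u : R -> R -> R) (L : R).
Hypothesis u_periodic : periodic_x L u.

Lemma Dx_periodic (g : R -> R -> R) (t : R) :
  (forall x, g (x + L) t = g x t) -> forall n x, Dx n g (x + L) t = Dx n g x t.
Proof.
  intros Hg n; induction n as [|n IHn]; intros x; [apply Hg |].
  simpl; rewrite <- Derive_shift; apply Derive_ext; intros y; apply IHn.
Qed.

Lemma Dt_periodic (m : nat) (x t : R) : 0 < t -> Dt m u (x + L) t = Dt m u x t.
Proof.
  revert x t; induction m as [|m IHm]; intros x t Ht; [now apply u_periodic |].
  simpl; apply Derive_ext_loc.
  apply filter_imp with (2 := open_gt 0 t Ht); intros s Hs; now apply IHm.
Qed.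

Lemma Dx_Dt_periodic (n m : nat) (x t : R) :
  0 < t -> Dx n (Dt m u) (x + L) t = Dx n (Dt m u) x t.
Proof. intros Ht; apply Dx_periodic; intros y; now apply Dt_periodic. Qed.

End Periodicity.

Section Smooth.

Variable u : R -> R -> R.
Hypothesis u_smooth : smooth_on_halfplane u.

Lemma is_derive_Dx (n m : nat) (x t : R) :
  0 < t -> is_derive (fun y => Dx n (Dt m u) y t) x (Dx (S n) (Dt m u) x t).
Proof. intros Ht; exact (Derive_correct _ _ (proj1 (u_smooth n m x t Ht))). Qed.

Lemma is_derive_Dt (m : nat) (x t : R) :
  0 < t -> is_derive (fun s => Dt m u x s) t (Dt (S m) u x t).
Proof. intros Ht; exact (Derive_correct _ _ (proj1 (proj2 (u_smooth O m x t Ht)))). Qed.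

Lemma continuous_Dx_Dt_x (n m : nat) (x t : R) :
  0 < t -> continuous (fun y => Dx n (Dt m u) y t) x.
Proof. intros Ht; apply continuous_section_fst, (proj2 (proj2 (u_smooth n m x t Ht))). Qed.

Lemma continuous_Dx_Dt_tx (n m : nat) (x t : R) :
  0 < t -> continuous (fun p : R * R => Dx n (Dt m u) (snd p) (fst p)) (t, x).
Proof. intros Ht; apply continuous_swap, (proj2 (proj2 (u_smooth n m x t Ht))). Qed.

Lemma is_derive_energy_density_t (x t : R) :
  0 < t -> is_derive (fun s => energy_density (u x s)) t
             (Dt 1 u x t * (u x t ^ 2 + 2 * u x t)).
Proof.
  intros Ht; apply (is_derive_comp energy_density (fun s => u x s)).
  - apply is_derive_energy_density.
  - exact (is_derive_Dt 0 x t Ht).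
Qed.

Lemma is_derive_energy (a b t : R) :
  0 < t ->
  is_derive (fun s => RInt (fun x => energy_density (u x s)) a b) t
    (RInt (fun x => Dt 1 u x t * (u x t ^ 2 + 2 * u x t)) a b).
Proof.
  intros Ht.
  erewrite RInt_ext; cycle 1.
  { intros x _; symmetry; exact (is_derive_unique _ _ _ (is_derive_energy_density_t x t Ht)). }
  apply (is_derive_RInt_param (fun s x => energy_density (u x s))).
  - apply filter_imp with (2 := open_gt 0 t Ht); intros s Hs x _.
    eexists; exact (is_derive_energy_density_t x s Hs).
  - intros x _.
    apply continuity_2d_pt_ext_loc with
      (fun s y => Dt 1 u y s * (u y s ^ 2 + 2 * u y s)).
    { exists (mkposreal t Ht); intros s y Hs _.
      assert (Hs0 : 0 < s) by (apply Rabs_lt_between' in Hs; simpl in Hs; lra).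
      symmetry; exact (is_derive_unique _ _ _ (is_derive_energy_density_t y s Hs0)). }
    apply continuity_2d_pt_filterlim.
    apply (continuous_energy_rate (fun p => u (snd p) (fst p))
             (fun p => Dt 1 u (snd p) (fst p)) (t, x)).
    + exact (continuous_Dx_Dt_tx 0 0 x t Ht).
    + exact (continuous_Dx_Dt_tx 0 1 x t Ht).
  - apply filter_imp with (2 := open_gt 0 t Ht); intros s Hs.
    apply (ex_RInt_continuous (V := R_CompleteNormedModule)); intros x _.
    apply (continuous_comp (fun y => u y s)), continuous_energy_density.
    exact (continuous_Dx_Dt_x 0 0 x s Hs).
Qed.

Hypothesis u_rosenau : rosenau_solution u.

Definition rosenau_energy_flux (x t : R) : R :=
  - (u x t + u x t ^ 2 / 2 + Dx 3 (Dt 1 u) x t) ^ 2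
  - 2 * Dx 2 (Dt 1 u) x t * Dt 1 u x t + Dx 1 (Dt 1 u) x t ^ 2.

Lemma is_derive_rosenau_energy_flux (x t : R) :
  0 < t -> is_derive (fun y => rosenau_energy_flux y t) x
             (Dt 1 u x t * (u x t ^ 2 + 2 * u x t)).
Proof.
  intros Ht.
  apply (is_derive_energy_flux (fun y => u y t) (fun y => Dt 1 u y t)
           (fun y => Dx 1 (Dt 1 u) y t) (fun y => Dx 2 (Dt 1 u) y t)
           (fun y => Dx 3 (Dt 1 u) y t) x (Dx 1 u x t) (Dx 4 (Dt 1 u) x t)).
  - exact (is_derive_Dx 0 0 x t Ht).
  - exact (is_derive_Dx 0 1 x t Ht).
  - exact (is_derive_Dx 1 1 x t Ht).
  - exact (is_derive_Dx 2 1 x t Ht).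
  - exact (is_derive_Dx 3 1 x t Ht).
  - exact (u_rosenau x t Ht).
Qed.

Lemma energy_rate_RInt_period (L t : R) :
  periodic_x L u -> 0 < t ->
  RInt (fun x => Dt 1 u x t * (u x t ^ 2 + 2 * u x t)) 0 L = 0.
Proof.
  intros Hp Ht.
  apply (RInt_derive_eq_0 (fun y => rosenau_energy_flux y t)).
  - intros x _; exact (is_derive_rosenau_energy_flux x t Ht).
  - intros x _; apply continuous_energy_rate.
    + exact (continuous_Dx_Dt_x 0 0 x t Ht).
    + exact (continuous_Dx_Dt_x 0 1 x t Ht).
  - unfold rosenau_energy_flux; rewrite <- (Rplus_0_l L).
    rewrite (Hp 0 t Ht), (Dt_periodic u L Hp 1 0 t Ht),
      (Dx_Dt_periodic u L Hp 1 1 0 t Ht), (Dx_Dt_periodic u L Hp 2 1 0 t Ht),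
      (Dx_Dt_periodic u L Hp 3 1 0 t Ht).
    reflexivity.
Qed.

End Smooth.

Theorem mainTheorem4 (u : R -> R -> R) (L : R) :
  0 < L ->
  smooth_on_halfplane u ->
  periodic_x L u ->
  rosenau_solution u ->
  forall t1 t2 : R, 0 < t1 -> 0 < t2 ->
    RInt (fun x => / 3 * (u x t1) ^ 3 + (u x t1) ^ 2) 0 L =
    RInt (fun x => / 3 * (u x t2) ^ 3 + (u x t2) ^ 2) 0 L.
Proof.
  intros _ Hs Hp Hr.
  apply (is_derive_0_pos_eq (fun s => RInt (fun x => energy_density (u x s)) 0 L)).
  intros t Ht.
  pose proof (is_derive_energy u Hs 0 L t Ht) as Hd.
  now rewrite (energy_rate_RInt_period u Hs Hr L t Hp Ht) in Hd.
Qed.
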